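(* Let $n\ge1$ and $\mathcal{K}=\{\texttt{a},\texttt{b}\}$. For the uniform prior $\pi$ on $\mathcal{K}^n$ and the single-target gain function $g_{\rm T}$, $$V_{\rm T}[\pi\triangleright\mathbf{S}]=\frac12+\frac{1}{2^n}\binom{n-1}{\lfloor\frac{n-1}{2}\rfloor}.$$
   Context: A dataset is $x=(x_0,\dots,x_{n-1})\in\mathcal{K}^n$; its histogram $h(x)$ is the map $\kappa\mapsto|\{i:x_i=\kappa\}|$; $\#z$ is the number of datasets with histogram $z$. Shuffle channel $\mathbf{S}:\mathcal{K}^n\to\mathcal{K}^n$: $\mathbf{S}_{x,y}=1/\#h(x)$ if $h(y)=h(x)$, else $0$. Uniform prior: $\pi_x=1/2^n$. Single-target gain function: $\mathcal{W}=\mathcal{K}$, $g_{\rm T}(w,x)=1$ if $x_0=w$, else $0$. Posterior vulnerability: $V_{\rm T}[\pi\triangleright\mathbf{C}]=\sum_{y}\max_{w\in\mathcal{W}}\sum_{x}\pi_x\mathbf{C}_{x,y}g_{\rm T}(w,x)$. *)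

From mathcomp Require Import all_boot all_order all_algebra.
Set Implicit Arguments. Unset Strict Implicit. Unset Printing Implicit Defensive.
Import Order.TTheory GRing.Theory Num.Theory.
Local Open Scope ring_scope.

(* Key set K = {a, b}, encoded as bool (a := true, b := false). *)
Definition K := bool.

Definition dataset (n : nat) := n.-tuple K.

Definition hist n (x : dataset n) : {ffun K -> nat} :=
  [ffun k => count_mem k x].

Definition nhist n (x : dataset n) : nat :=
  #|[set y : dataset n | hist y == hist x]|.

Definition shuffle (R : fieldType) n (x y : dataset n) : R :=
  if hist y == hist x then (nhist x)%:R^-1 else 0.

Definition unif_prior (R : fieldType) n (x : dataset n) : R := (2 ^ n)%:R^-1.

(* Target entry x_0 (for n >= 1 this is the first entry of x; the default
   [true] of [head] is never used under the hypothesis 0 < n). *)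
Definition x0 n (x : dataset n) : K := head true (val x).

Definition gT (R : fieldType) n (w : K) (x : dataset n) : R :=
  if x0 x == w then 1 else 0.

(* Posterior vulnerability
   V[pi |> C] = sum_y max_w sum_x pi_x C_{x,y} g(w,x).
   The max over the finite nonempty W is taken with neutral 0, which is
   harmless since all summands are nonnegative. *)
Definition postV (R : realFieldType) n (pi : dataset n -> R)
  (C : dataset n -> dataset n -> R) (g : K -> dataset n -> R) : R :=
  \sum_(y : dataset n) \big[Num.max/0]_(w : K) \sum_(x : dataset n) pi x * C x y * g w x.

From mathcomp Require Import all_boot all_order all_algebra.
From mathcomp Require Import zify ring.
Set Implicit Arguments.
Unset Strict Implicit.
Unset Printing Implicit Defensive.
Import Order.TTheory GRing.Theory Num.Theory.
Local Open Scope ring_scope.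

(* The shuffle channel reveals only the number k of entries a, and every
   dataset with that count is equally likely.  Hence the optimal guess for x_0
   is the majority value, and averaging over the histogram classes turns the
   vulnerability into 2^-n times the number of x whose first entry agrees with
   the majority guess for its own count.  Writing x = b :: t with t of length
   m = n - 1 and j entries a, for every t exactly one choice of b is right,
   and both are when j = m/2; so that number is 2^m + C(m, m/2). *)

Lemma big_tupleS (R : Type) (idx : R) (op : Monoid.com_law idx) m
    (F : m.+1.-tuple bool -> R) :
  \big[op/idx]_(t : m.+1.-tuple bool) F t =
  op (\big[op/idx]_(t : m.-tuple bool) F (cons_tuple true t))
     (\big[op/idx]_(t : m.-tuple bool) F (cons_tuple false t)).
Proof.
rewrite (reindex (fun p : bool * m.-tuple bool => cons_tuple p.1 p.2)) /=.
  rewrite -(pair_big xpredT xpredT (fun b t => F (cons_tuple b t))) /=.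
  by rewrite big_bool.
exists (fun t => (thead t, [tuple of behead t])) => [[b t] _ | t _] /=.
  by congr pair; apply: val_inj.
by apply: val_inj; rewrite /= [in RHS](tuple_eta t).
Qed.

Lemma sum_tuples_count_mem m k :
  (\sum_(t : m.-tuple bool) (count_mem true t == k) = 'C(m, k))%N.
Proof.
elim: m k => [|m IHm] k.
  rewrite (eq_bigr (fun=> nat_of_bool (0 == k)%N)) => [|t _]; last first.
    by rewrite tuple0.
  by rewrite sum_nat_const card_tuple; case: k.
rewrite big_tupleS /=.
under eq_bigr do rewrite add1n.
under [X in (_ + X)%N]eq_bigr do rewrite add0n.
case: k => [|k]; first by rewrite big1 // add0n IHm !bin0.
by rewrite !IHm binS addnC.
Qed.

Lemma count_mem_false (s : seq bool) :
  (count_mem false s = size s - count_mem true s)%N.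
Proof.
rewrite -(count_predC (pred1 true) s) addKn.
by apply: eq_count => -[].
Qed.

Lemma eq_hist n (x y : dataset n) :
  (hist y == hist x) = (count_mem true y == count_mem true x).
Proof.
apply/eqP/eqP => [/ffunP/(_ true) | eq_count_true]; first by rewrite !ffunE.
apply/ffunP => -[]; rewrite !ffunE //.
by rewrite !count_mem_false !size_tuple eq_count_true.
Qed.

Lemma leq_bin_binS m j : (j.*2 < m)%N -> ('C(m, j) <= 'C(m, j.+1))%N.
Proof.
move=> lt_2j_m; rewrite -(leq_pmul2l (ltn0Sn j)) mul_bin_left leq_mul //; lia.
Qed.

Lemma leq_binS_bin m j : (m <= j.*2.+1)%N -> ('C(m, j.+1) <= 'C(m, j))%N.
Proof.
move=> le_m_2j1; rewrite -(leq_pmul2l (ltn0Sn j)) mul_bin_left leq_mul //; lia.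
Qed.

(* For datasets of length m.+1 with k entries a: guess a iff 2k >= m.+1. *)
Definition best_guess m k : bool := (m < k.*2)%N.

Lemma sum_class_target m k w :
  (\sum_(x : m.+1.-tuple bool | count_mem true x == k) (x0 x == w) =
   \sum_(t : m.-tuple bool) (w + count_mem true t == k))%N.
Proof.
rewrite big_mkcond big_tupleS /x0 /=.
case: w.
  rewrite [X in (_ + X)%N]big1 ?addn0 => [|t _]; last by case: ifP.
  by apply: eq_bigr => t _; case: eqP.
rewrite [X in (X + _)%N]big1 ?add0n => [|t _]; last by case: ifP.
by apply: eq_bigr => t _; case: eqP.
Qed.

Lemma leq_sum_target_best m k (w : bool) :
  (\sum_(t : m.-tuple bool) (w + count_mem true t == k) <=
   \sum_(t : m.-tuple bool) (best_guess m k + count_mem true t == k))%N.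
Proof.
case: k => [|j]; first by case: w; rewrite /best_guess // big1.
have sum_targetS (b : bool) :
    (\sum_(t : m.-tuple bool) (b + count_mem true t == j.+1) =
     'C(m, if b then j else j.+1))%N.
  by rewrite -sum_tuples_count_mem; case: b; apply: eq_bigr => t _.
rewrite !sum_targetS /best_guess.
case: w; case: ltnP => // h; [apply: leq_bin_binS | apply: leq_binS_bin]; lia.
Qed.

Lemma best_guess_hit m j :
  ((true == best_guess m j.+1) + (false == best_guess m j) = 1 + (j == m./2))%N.
Proof.
rewrite /best_guess; have := odd_double_half m.
by case: (odd m) => /=; case: ltnP; case: ltnP; case: eqP => /=; lia.
Qed.

Lemma count_best_guess m :
  (\sum_(x : m.+1.-tuple bool) (x0 x == best_guess m (count_mem true x)) =
   2 ^ m + 'C(m, m./2))%N.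
Proof.
rewrite big_tupleS /x0 /= -big_split /=.
rewrite (eq_bigr _ (fun (t : m.-tuple bool) _ =>
  best_guess_hit m (count_mem true t))).
by rewrite big_split /= sum1_card card_tuple card_bool sum_tuples_count_mem.
Qed.

Lemma bigmax_bool_eq (R : realDomainType) (F : bool -> R) b :
  (forall w, F w <= F b) -> 0 <= F b -> \big[Num.max/0]_(w : bool) F w = F b.
Proof.
move=> F_le_Fb Fb_ge0; rewrite /index_enum !unlock /=.
apply/eqP; rewrite eq_le !ge_max !le_max !F_le_Fb Fb_ge0 /=.
by case: b {F_le_Fb Fb_ge0} => /=; rewrite lexx ?orbT.
Qed.

Lemma sum_class_average (R : numFieldType) (T : finType) (S : eqType)
    (c : T -> S) (F : T -> R) :
  \sum_(y : T) (\sum_(x | c x == c y) F x) / #|[set x | c x == c y]|%:R =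
  \sum_x F x.
Proof.
transitivity (\sum_y \sum_(x | c x == c y) F x / #|[set z | c z == c x]|%:R).
  apply: eq_bigr => y _; rewrite big_distrl /=.
  by apply: eq_bigr => x /eqP ->.
rewrite (exchange_big_dep xpredT) //=; apply: eq_bigr => x _.
rewrite sumr_const (@eq_card _ _ [set z | c z == c x]) => [|y]; last first.
  by rewrite inE eq_sym.
rewrite -(mulr_natr (F x / _)) divfK // pnatr_eq0 -lt0n card_gt0.
by apply/set0Pn; exists x; rewrite inE.
Qed.

Lemma sum_prior_shuffle_gain (R : realFieldType) n (y : dataset n) (w : K) :
  \sum_x unif_prior R x * shuffle R x y * gT R w x =
  (2 ^ n)%:R^-1 *
  ((\sum_(x : dataset n | hist x == hist y) (x0 x == w))%:R / (nhist y)%:R).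
Proof.
rewrite natr_sum big_distrl big_distrr [RHS]big_mkcond /=; apply: eq_bigr => x _.
rewrite /unif_prior /shuffle /gT eq_sym; case: eqP => [hist_xy | _].
  rewrite /nhist hist_xy.
  by case: (x0 x == w); rewrite ?mulr1 ?mul0r ?mulr0 ?mul1r.
by rewrite mulr0 mul0r.
Qed.

Lemma posterior_column (R : realFieldType) m (y : dataset m.+1) :
  \big[Num.max/0]_(w : K) \sum_x unif_prior R x * shuffle R x y * gT R w x =
  (2 ^ m.+1)%:R^-1 *
  ((\sum_(x : dataset m.+1 | hist x == hist y)
      (x0 x == best_guess m (count_mem true x)))%:R / (nhist y)%:R).
Proof.
set k := count_mem true y.
have class_target (w : K) :
    (\sum_(x : dataset m.+1 | hist x == hist y) (x0 x == w) =
    \sum_(t : m.-tuple bool) (w + count_mem true t == k))%N.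
  by rewrite -sum_class_target; apply: eq_bigl => x; rewrite eq_hist.
have -> : (\sum_(x : dataset m.+1 | hist x == hist y)
             (x0 x == best_guess m (count_mem true x)) =
           \sum_(x : dataset m.+1 | hist x == hist y) (x0 x == best_guess m k))%N.
  by apply: eq_bigr => x; rewrite eq_hist => /eqP ->.
rewrite (bigmax_bool_eq (b := best_guess m k)) ?sum_prior_shuffle_gain //.
  move=> w; rewrite !sum_prior_shuffle_gain ler_wpM2l ?invr_ge0 ?ler0n //.
  rewrite ler_wpM2r ?invr_ge0 ?ler0n // ler_nat.
  by rewrite !class_target leq_sum_target_best.
by rewrite mulr_ge0 ?divr_ge0 ?invr_ge0 ?ler0n.
Qed.

Theorem mainTheorem10 (R : realFieldType) (n : nat) (hn : (0 < n)%N) :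
  postV (@unif_prior R n) (@shuffle R n) (@gT R n) =
  2^-1 + ('C(n.-1, n.-1./2))%:R / (2 ^ n)%:R.
Proof.
case: n hn => // m _; rewrite /postV.
under eq_bigr => y _ do rewrite posterior_column natr_sum.
rewrite -big_distrr /= sum_class_average.
rewrite -natr_sum count_best_guess natrD expnS natrM.
have pow2_neq0 : (2 ^ m)%:R != 0 :> R by rewrite pnatr_eq0 expn_eq0.
by field.
Qed.
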